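(* Let $a\in\mathbb{C}$ with $|a-\tfrac14|=\tfrac14$ and $a\neq 0$, and let $\varphi(z)=az^2+(1-2a)z+a$. Then the iterates $\varphi_n$ converge to the constant $1$ uniformly on all of $\mathbb{D}$, i.e. $\lim_{n\to\infty}\sup_{z\in\mathbb{D}}|\varphi_n(z)-1|=0$.
   Context: $\mathbb{D}$ is the open unit disk. $\varphi_n$ denotes the $n$-th iterate $\varphi\circ\cdots\circ\varphi$ ($n$ times). Such $\varphi$ is an analytic self-map of $\mathbb{D}$ with $\varphi(1)=1$, $\varphi'(1)=1$. *)

From Stdlib Require Import Reals.
From Coquelicot Require Import Coquelicot.
Open Scope C_scope.

Definition phi (a : C) (z : C) : C := a * (z * z) + (1 - 2 * a) * z + a.

Fixpoint iter_fn (f : C -> C) (n : nat) (z : C) : C :=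
  match n with
  | O => z
  | S m => f (iter_fn f m z)
  end.

(** The substitution [z = 1 - 1/(a (u + 1))] conjugates [phi a] to the map
    [u |-> u + 1 + 1/u].  The circle condition says [Re (1/a) = 2], so writing
    [1/a = 2 + i t], the unit disk is carried into the half-plane
    [2 Re u + t Im u > t^2/2], which the new map preserves.  On that half-plane the
    potential [2 Re u + t Im u - t^2/2 + max (Re u) (-(4 + t^2))] grows by at least
    [3/4] per step, while it is bounded by a linear function of [|u|]; hence
    [|u_n + 1| -> oo] uniformly, which is [phi_n -> 1] uniformly on the disk. *)
From Stdlib Require Import Reals Lra Psatz.
From Coquelicot Require Import Coquelicot.
Open Scope R_scope.

Definition step (u : C) : C := (u + 1 + / u)%C.

Lemma Re_step (u : C) :
  Re (step u) = Re u + 1 + Re u / (Re u * Re u + Im u * Im u).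
Proof. destruct u as [x y]; simpl; rewrite !Rmult_1_r; lra. Qed.

Lemma Im_step (u : C) :
  Im (step u) = Im u - Im u / (Re u * Re u + Im u * Im u).
Proof. destruct u as [x y]; simpl; rewrite !Rmult_1_r; lra. Qed.

Section HalfPlane.

Variable t : R.

Definition margin (u : C) : R := 2 * Re u + t * Im u - t * t / 2.

Definition potential (u : C) : R := margin u + Rmax (Re u) (-(4 + t * t)).

Lemma margin_pos_norm_pos (u : C) :
  margin u > 0 -> Re u * Re u + Im u * Im u > 0.
Proof.
  unfold margin; intros H.
  destruct (Req_dec (Re u) 0); destruct (Req_dec (Im u) 0); nra.
Qed.

Lemma margin_pos_neq0 (u : C) : margin u > 0 -> u <> 0%C /\ (u + 1)%C <> 0%C.
Proof.
  intros H; destruct u as [x y]; unfold margin in H; simpl in H.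
  split; intros E; injection E; intros; subst; nra.
Qed.

Lemma margin_step_sub (u : C) : margin u > 0 ->
  margin (step u) - margin u
  = (2 * (Re u * Re u + Im u * Im u) + 2 * Re u - t * Im u)
    / (Re u * Re u + Im u * Im u).
Proof.
  intros H; pose proof (margin_pos_norm_pos u H).
  unfold margin; rewrite Re_step, Im_step; field; lra.
Qed.

Lemma margin_step_ge (u : C) : margin u > 0 -> margin (step u) >= margin u.
Proof.
  intros H; pose proof (margin_pos_norm_pos u H).
  pose proof (margin_step_sub u H).
  assert (0 <= (2 * (Re u * Re u + Im u * Im u) + 2 * Re u - t * Im u)
               / (Re u * Re u + Im u * Im u)).
  { apply Rdiv_le_0_compat; [unfold margin in H; nra | lra]. }
  lra.
Qed.

Lemma margin_step_ge_far_left (u : C) : margin u > 0 -> Re u < -(4 + t * t) ->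
  margin (step u) >= margin u + 1.
Proof.
  intros H Hx; pose proof (margin_pos_norm_pos u H).
  pose proof (margin_step_sub u H).
  assert (1 <= (2 * (Re u * Re u + Im u * Im u) + 2 * Re u - t * Im u)
               / (Re u * Re u + Im u * Im u)).
  { apply Rmult_le_reg_r with (Re u * Re u + Im u * Im u); [lra|].
    replace (_ / _ * _) with (2 * (Re u * Re u + Im u * Im u) + 2 * Re u - t * Im u)
      by (field; lra).
    assert ((Re u + 1) * (Re u + 1) >= (3 + t * t) * (3 + t * t)) by nra.
    nra. }
  lra.
Qed.

(* On the half-plane [|u + 2| >= 2], so [Re u / |u|^2 >= -1/4]. *)
Lemma Re_step_ge (u : C) : margin u > 0 -> Re (step u) >= Re u + 3 / 4.
Proof.
  intros H; pose proof (margin_pos_norm_pos u H).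
  rewrite Re_step.
  assert (Re u / (Re u * Re u + Im u * Im u) >= -1 / 4).
  { apply Rle_ge, Rmult_le_reg_r with (Re u * Re u + Im u * Im u); [lra|].
    replace (Re u / _ * _) with (Re u) by (field; lra).
    unfold margin in H.
    assert (0 <= Re u * Re u + (Im u - t) * (Im u - t)).
    { pose proof (Rle_0_sqr (Re u)); pose proof (Rle_0_sqr (Im u - t)).
      unfold Rsqr in *; lra. }
    nra. }
  lra.
Qed.

Lemma potential_step (u : C) : margin u > 0 ->
  potential (step u) >= potential u + 3 / 4.
Proof.
  intros H; unfold potential.
  pose proof (Re_step_ge u H); pose proof (margin_step_ge u H).
  pose proof (Rmax_l (Re (step u)) (-(4 + t * t))).
  destruct (Rlt_dec (Re u) (-(4 + t * t))) as [Hx|Hx].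
  - pose proof (margin_step_ge_far_left u H Hx).
    pose proof (Rmax_r (Re (step u)) (-(4 + t * t))).
    rewrite (Rmax_right (Re u)) by lra; lra.
  - rewrite (Rmax_left (Re u)) by lra; lra.
Qed.

Lemma potential_le (u : C) :
  potential u <= (3 + Rabs t) * (Rabs (Re u) + Rabs (Im u)).
Proof.
  unfold potential, margin.
  assert (Rmax (Re u) (-(4 + t * t)) <= Rabs (Re u)).
  { apply Rmax_lub; [apply Rle_abs | pose proof (Rabs_pos (Re u)); nra]. }
  assert (t * Im u <= Rabs t * Rabs (Im u)) by (rewrite <- Rabs_mult; apply Rle_abs).
  assert (0 <= Rabs t * Rabs (Re u)) by (apply Rmult_le_pos; apply Rabs_pos).
  pose proof (Rle_abs (Re u)); pose proof (Rabs_pos (Im u)).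
  assert (0 <= t * t) by nra.
  lra.
Qed.

Lemma potential_le_Cmod_succ (u : C) :
  potential u <= (3 + Rabs t) * (2 * Cmod (u + 1)%C + 1).
Proof.
  pose proof (Rmax_Cmod (u + 1)%C) as HC; simpl in HC; rewrite Rplus_0_r in HC.
  pose proof (Rle_trans _ _ _ (Rmax_l _ _) HC) as Hx.
  pose proof (Rle_trans _ _ _ (Rmax_r _ _) HC) as Hy.
  change (fst u) with (Re u) in Hx; change (snd u) with (Im u) in Hy.
  assert (Rabs (Re u) <= Cmod (u + 1)%C + 1).
  { revert Hx; unfold Rabs; repeat destruct Rcase_abs; lra. }
  eapply Rle_trans; [apply potential_le|].
  apply Rmult_le_compat_l; [pose proof (Rabs_pos t); lra | lra].
Qed.

Lemma margin_iter_pos (u : C) (n : nat) :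
  margin u > 0 -> margin (iter_fn step n u) > 0.
Proof.
  intros H; induction n as [|n IH]; simpl; [exact H|].
  pose proof (margin_step_ge _ IH); lra.
Qed.

Lemma potential_iter_ge (u : C) (n : nat) : margin u > 0 ->
  potential (iter_fn step n u) >= - (4 + t * t) + 3 / 4 * INR n.
Proof.
  intros H; induction n as [|n IH]; simpl iter_fn.
  - unfold potential; pose proof (Rmax_r (Re u) (-(4 + t * t))).
    simpl; lra.
  - pose proof (potential_step _ (margin_iter_pos u n H)).
    rewrite S_INR; lra.
Qed.

Lemma iter_step_escapes (R : R) : exists N : nat, forall n : nat, (N <= n)%nat ->
  forall u : C, margin u > 0 -> R < Cmod (iter_fn step n u + 1)%C.
Proof.
  destruct (INR_unbounded (4 / 3 * (4 + t * t + (3 + Rabs t) * (2 * R + 1))))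
    as [N HN].
  exists N; intros n Hn u Hu.
  apply le_INR in Hn.
  pose proof (potential_iter_ge u n Hu).
  pose proof (potential_le_Cmod_succ (iter_fn step n u)).
  pose proof (Rabs_pos t).
  apply Rmult_lt_reg_l with (3 + Rabs t); [lra|].
  nra.
Qed.

(* [u0 + 1 = (2 + i t) / (1 - z)], and [Re (1/(1 - z)) > 1/2] on the disk. *)
Lemma disk_to_half_plane (z : C) :
  Cmod z < 1 -> margin (- ((2, t) / (z - 1)) - 1)%C > 0.
Proof.
  intros Hz; destruct z as [x y].
  assert (Hn : x * x + y * y < 1).
  { pose proof (Cmod2_alt (x, y)); pose proof (Cmod_ge_0 (x, y)).
    simpl in *; rewrite !Rmult_1_r in *; nra. }
  unfold margin; simpl; rewrite !Rmult_1_r.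
  set (p := x + - (1)); set (q := y + - 0).
  assert (p * p + q * q > 0) by (unfold p, q; nra).
  assert (-2 * p > p * p + q * q) by (unfold p, q; nra).
  match goal with |- ?e > 0 =>
    replace e with ((4 + t * t) * ((-2 * p - (p * p + q * q)) / (2 * (p * p + q * q))))
      by (field; lra) end.
  apply Rmult_lt_0_compat; [nra | apply Rdiv_lt_0_compat; lra].
Qed.

End HalfPlane.

Lemma phi_conj_step (a u : C) : a <> 0%C -> u <> 0%C -> (u + 1)%C <> 0%C ->
  phi a (1 - / (a * (u + 1)))%C = (1 - / (a * (step u + 1)))%C.
Proof.
  intros Ha Hu Hu1.
  assert (E : (step u + 1 = (u + 1) * (u + 1) / u)%C) by (unfold step; field; auto).
  rewrite E; unfold phi; field; repeat split; auto.
Qed.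

Lemma iter_phi_conj (a : C) (t : R) (u : C) (n : nat) : a <> 0%C -> margin t u > 0 ->
  iter_fn (phi a) n (1 - / (a * (u + 1)))%C
  = (1 - / (a * (iter_fn step n u + 1)))%C.
Proof.
  intros Ha Hu; induction n as [|n IH]; simpl; [reflexivity|].
  rewrite IH; destruct (margin_pos_neq0 t _ (margin_iter_pos t u n Hu)).
  apply phi_conj_step; auto.
Qed.

Lemma circle_inv_Re_two (a : C) :
  Cmod (a - RtoC (1 / 4)) = 1 / 4 -> a <> 0%C -> exists t : R, (a * (2, t) = 1)%C.
Proof.
  intros Hc Ha; destruct a as [a1 a2].
  assert (Hrel : a1 * a1 + a2 * a2 = a1 / 2).
  { pose proof (Cmod2_alt ((a1, a2) - RtoC (1 / 4))%C) as H.
    rewrite Hc in H; simpl in H; rewrite !Rmult_1_r in H; lra. }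
  assert (a1 <> 0).
  { intros ->; apply Ha; assert (a2 = 0) by nra; subst; reflexivity. }
  exists (-2 * a2 / a1).
  unfold Cmult; apply injective_projections; simpl.
  - replace (a1 * 2 - a2 * (-2 * a2 / a1)) with (2 * (a1 * a1 + a2 * a2) / a1)
      by (field; lra).
    rewrite Hrel; field; lra.
  - field; lra.
Qed.

Lemma disk_point_eq (a : C) (t : R) (z : C) : a <> 0%C -> (a * (2, t) = 1)%C ->
  Cmod z < 1 -> z = (1 - / (a * ((- ((2, t) / (z - 1)) - 1) + 1)))%C.
Proof.
  intros Ha hab Hz.
  assert (Hz1 : (z - 1)%C <> 0%C).
  { intros E; assert (z = 1%C) by (replace z with ((z - 1) + 1)%C by ring;
      rewrite E; ring).
    subst z; rewrite Cmod_R, Rabs_R1 in Hz; lra. }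
  replace (a * (- ((2, t) / (z - 1)) - 1 + 1))%C with (- ((a * (2, t)) / (z - 1)))%C
    by (field; auto).
  rewrite hab; field; auto.
Qed.

Lemma Cmod_one_sub_inv_sub_one (w : C) : w <> 0%C ->
  Cmod (1 - / w - RtoC 1)%C = / Cmod w.
Proof.
  intros Hw; replace (1 - / w - RtoC 1)%C with (- / w)%C by ring.
  rewrite Cmod_opp; apply Cmod_inv; exact Hw.
Qed.

Theorem mainTheorem2 (a : C) :
  Cmod (a - RtoC (1/4)) = 1/4 -> a <> RtoC 0 ->
  forall eps : R, 0 < eps ->
  exists N : nat, forall n : nat, (N <= n)%nat ->
  forall z : C, Cmod z < 1 ->
  Cmod (iter_fn (phi a) n z - RtoC 1) <= eps.
Proof.
  intros Hc Ha eps Heps.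
  destruct (circle_inv_Re_two a Hc Ha) as [t hab].
  assert (HCa : Cmod a > 0).
  { pose proof (Cmod_ge_0 a); destruct (Req_dec (Cmod a) 0) as [E|]; [|lra].
    exfalso; apply Ha, Cmod_eq_0, E. }
  destruct (iter_step_escapes t (/ (eps * Cmod a))) as [N HN].
  exists N; intros n Hn z Hz.
  set (u := (- ((2, t) / (z - 1)) - 1)%C).
  pose proof (disk_to_half_plane t z Hz) as Hu; fold u in Hu.
  rewrite (disk_point_eq a t z Ha hab Hz); fold u.
  rewrite (iter_phi_conj a t u n Ha Hu).
  pose proof (HN n Hn u Hu) as Hbig.
  assert (Hpos : 0 < Cmod a * Cmod (iter_fn step n u + 1)%C).
  { apply Rmult_lt_0_compat; [lra|].
    eapply Rlt_trans; [|exact Hbig]; apply Rinv_0_lt_compat; nra. }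
  rewrite Cmod_one_sub_inv_sub_one, Cmod_mult
    by (intros E; apply (f_equal Cmod) in E; rewrite Cmod_mult, Cmod_0 in E; lra).
  rewrite <- (Rinv_inv eps); apply Rlt_le, Rinv_lt_contravar.
  - apply Rmult_lt_0_compat; [apply Rinv_0_lt_compat|]; lra.
  - replace (/ eps) with (Cmod a * / (eps * Cmod a)) by (field; lra).
    apply Rmult_lt_compat_l; lra.
Qed.
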